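(* For every integer $n\ge 0$ let $\mathcal P_n$ be the complex vector space of polynomials $p(\xi_1,\ldots,\xi_n|\eta_1,\ldots,\eta_n)$ that are homogeneous of weighted degree $n$, where the variables $\xi_i$ and $\eta_i$ are assigned weight $i$, and that satisfy the following condition: for every integer $N\ge0$ and every $k\in\frac12\mathbb Z$ with $N/2+k$ and $N/2-k$ non-negative integers, the polynomials $$P^{[p]}_{N,k}(X|Y)=p\bigl(S_1(X),\ldots,S_n(X)\,\big|\,S_1(Y),\ldots,S_n(Y)\bigr),\qquad X=(x_1,\ldots,x_{N/2+k}),\ Y=(y_1,\ldots,y_{N/2-k}),$$ where $S_r(X)=\sum_i x_i^r$ denotes the $r$-th power sum, satisfy $$P^{[p]}_{N+2,k}(X,-x\,|\,x,Y)=P^{[p]}_{N,k}(X|Y)$$ identically in all variables (on the left, the first group of variables is $(x_1,\ldots,x_{N/2+k},-x)$ and the second is $(x,y_1,\ldots,y_{N/2-k})$). Then $$\sum_{n=0}^\infty q^n\dim\mathcal P_n=\prod_{k=1}^\infty\frac1{1-q^k}.$$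
   Context: The right-hand side is the generating function of the number of integer partitions, i.e. the character of the Fock module of a single Heisenberg algebra. *)

From HB Require Import structures.
From mathcomp Require Import all_boot all_order all_algebra.
From mathcomp Require Import mpoly.
Set Implicit Arguments. Unset Strict Implicit. Unset Printing Implicit Defensive.
Import Order.TTheory GRing.Theory Num.Theory.
Local Open Scope ring_scope.

(* Polynomials p(xi_1..xi_n | eta_1..eta_n) are elements of {mpoly F[n + n]}:
   the variable with index (lshift n i), i : 'I_n, is xi_(i+1), and the
   variable with index (rshift n i) is eta_(i+1). *)

Definition var_weight (n : nat) (j : 'I_(n + n)) : nat :=
  match split j with inl i => i.+1 | inr i => i.+1 end.

Definition wdeg (n : nat) (m : 'X_{1.. n + n}) : nat :=
  (\sum_(j : 'I_(n + n)) var_weight j * m j)%N.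

Definition wt_homog (F : fieldType) (n d : nat) (p : {mpoly F[n + n]}) : Prop :=
  forall m, m \in msupp p -> wdeg m = d.

Definition psum (F : fieldType) (r : nat) (X : seq F) : F :=
  \sum_(z <- X) z ^+ r.

Definition psum_point (F : fieldType) (n : nat) (X Y : seq F) : 'I_(n + n) -> F :=
  fun j => match split j with
           | inl i => psum i.+1 X
           | inr i => psum i.+1 Y
           end.

(* P^{[p]}_{N,k}(X|Y), with size X = N/2 + k and size Y = N/2 - k *)
Definition Pfun (F : fieldType) (n : nat) (p : {mpoly F[n + n]}) (X Y : seq F) : F :=
  p.@[psum_point X Y].

(* the stability condition P_{N+2,k}(X,-x | x,Y) = P_{N,k}(X|Y), for all N, k
   (i.e. all sizes of X and Y) and all values of the variables *)
Definition stable (F : fieldType) (n : nat) (p : {mpoly F[n + n]}) : Prop :=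
  forall (X Y : seq F) (x : F), Pfun p (rcons X (- x)) (x :: Y) = Pfun p X Y.

Definition Pspace (F : fieldType) (n : nat) (p : {mpoly F[n + n]}) : Prop :=
  @wt_homog F n n p /\ stable p.

Definition lin_indep (F : fieldType) (V : lmodType F) (d : nat) (f : 'I_d -> V) : Prop :=
  forall c : 'I_d -> F, \sum_(i < d) c i *: f i = 0 -> forall i, c i = 0.

Definition has_dim (F : fieldType) (V : lmodType F) (S : V -> Prop) (d : nat) : Prop :=
  (exists f : 'I_d -> V, (forall i, S (f i)) /\ lin_indep f) /\
  (forall f : 'I_d.+1 -> V, (forall i, S (f i)) -> ~ lin_indep f).

(* coefficient of q^n in prod_{k>=1} 1/(1 - q^k), computed (exactly) from the
   truncation prod_{k=1}^{n} sum_{j=0}^{n} q^(k j): the factors with k > n and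
   the terms q^(kj) with kj > n do not contribute to the coefficient of q^n. *)
Definition euler_poly (n : nat) : {poly nat} :=
  (\prod_(1 <= k < n.+1) \sum_(j < n.+1) 'X^(k * j))%R.

Definition euler_coef (n : nat) : nat := nth 0%N (polyseq (euler_poly n)) n.

From HB Require Import structures.
From mathcomp Require Import all_boot all_order all_algebra.
From mathcomp Require Import mpoly.
From mathcomp Require Import ring cyclic separable cyclotomic.
Set Implicit Arguments. Unset Strict Implicit. Unset Printing Implicit Defensive.
Import Order.TTheory GRing.Theory Num.Theory.
Local Open Scope ring_scope.

(* Stability lets one append pairs (-z | z) to the arguments.  Over an
   algebraically closed field of characteristic 0 the power sums S_1..S_n of a
   list take arbitrary prescribed values, so a stable p is invariant under the
   shifts (xi_i, eta_i) |-> (xi_i + (-1)^(i+1) c_i, eta_i + c_i), whence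
   p(xi | eta) = p(xi - (-1)^(i+1) eta | 0).  Thus p is determined by its
   eta-free part, a polynomial in xi of weighted degree n, and dim P_n is at most
   the number of partitions of n.  Conversely the monomials in
   zeta_i = xi_i - (-1)^(i+1) eta_i are stable, because S_i(-x) = (-1)^i S_i(x),
   and independent. *)

Section PowerSums.
Variable F : fieldType.

Lemma psum_cat r (X Y : seq F) : psum r (X ++ Y) = psum r X + psum r Y.
Proof. by rewrite /psum big_cat. Qed.

Lemma psum_cons r x (X : seq F) : psum r (x :: X) = x ^+ r + psum r X.
Proof. by rewrite /psum big_cons. Qed.

Lemma psum_rcons r x (X : seq F) : psum r (rcons X x) = psum r X + x ^+ r.
Proof. by rewrite -cats1 psum_cat /psum big_seq1. Qed.

Lemma perm_psum r (X Y : seq F) : perm_eq X Y -> psum r X = psum r Y.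
Proof. by move=> eqXY; rewrite /psum (perm_big _ eqXY). Qed.

Lemma psum_opp r (X : seq F) : psum r (map -%R X) = (-1) ^+ r * psum r X.
Proof.
rewrite /psum big_map mulr_sumr; apply: eq_bigr => x _.
by rewrite -(mulN1r x) exprMn.
Qed.

Lemma sum_expr_unity_root k (z : F) :
  z ^+ k = 1 -> z != 1 -> \sum_(i < k) z ^+ i = 0.
Proof.
move=> zk1 z_neq1; apply/eqP; have /eqP := subrX1 z k.
by rewrite zk1 subrr eq_sym mulf_eq0 subr_eq0 (negbTE z_neq1).
Qed.

Lemma psum_root_orbit k (w c : F) : k.-primitive_root w ->
  let L := [seq c * w ^+ j | j <- iota 0 k] in
  (forall r, (0 < r < k)%N -> psum r L = 0) /\ psum k L = k%:R * c ^+ k.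
Proof.
move=> prim_w L; have powE r j : (c * w ^+ j) ^+ r = c ^+ r * (w ^+ r) ^+ j.
  by rewrite exprMn -!exprM mulnC.
rewrite /L /psum; have -> : iota 0 k = index_iota 0 k by rewrite /index_iota subn0.
split.
  move=> r /andP [r_gt0 r_ltk]; rewrite big_map big_mkord.
  under eq_bigr do rewrite powE.
  rewrite -mulr_sumr sum_expr_unity_root ?mulr0 //.
    by rewrite -exprM mulnC exprM (prim_expr_order prim_w) expr1n.
  by rewrite -(prim_order_dvd prim_w); apply/negP => /(dvdn_leq r_gt0); rewrite leqNgt r_ltk.
rewrite big_map big_mkord.
under eq_bigr do rewrite powE (prim_expr_order prim_w) expr1n mulr1.
by rewrite sumr_const card_ord mulr_natl.
Qed.

End PowerSums.

Section ClosedPowerSums.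
Variable F : numClosedFieldType.

Lemma closed_prim_root_exists k : (k > 0)%N -> exists z : F, k.-primitive_root z.
Proof.
move=> k_gt0; pose p : {poly F} := 'X^k - 1.
have [r Dp] := closed_field_poly_normal p.
rewrite (monicP _) ?monicXnsubC // scale1r in Dp.
have r_unity : all k.-unity_root r.
  by apply/allP=> z; rewrite -root_prod_XsubC -Dp.
have size_r : (k < (size r).+1)%N by rewrite -(size_prod_XsubC r id) -Dp size_XnsubC.
have [|z] := hasP (has_prim_root k_gt0 r_unity _ size_r); last by exists z.
by rewrite -separable_prod_XsubC -Dp separable_Xn_sub_1 // pnatr_eq0 -lt0n.
Qed.

(* Appending an orbit of m-th roots of unity leaves the power sums of degree
   < m unchanged and moves the m-th one by an arbitrary amount. *)
Lemma psum_interpolate (a : nat -> F) m :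
  exists Z : seq F, forall r, (0 < r <= m)%N -> psum r Z = a r.
Proof.
elim: m => [|m [Z psumZ]]; first by exists [::] => -[].
pose c := m.+1.-root ((a m.+1 - psum m.+1 Z) / m.+1%:R).
have [w prim_w] := closed_prim_root_exists (ltn0Sn m).
have [psumL_lt psumL_eq] := psum_root_orbit c prim_w.
exists (Z ++ [seq c * w ^+ j | j <- iota 0 m.+1]) => r /andP [r_gt0]; rewrite leq_eqVlt ltnS => /orP [/eqP -> | r_lem].
  rewrite psum_cat psumL_eq rootCK // mulrC divfK ?pnatr_eq0 //.
  by rewrite addrC subrK.
by rewrite psum_cat psumL_lt ?psumZ ?r_gt0 ?addr0 // ltnS r_lem.
Qed.

End ClosedPowerSums.
Section IdentityPrinciple.
Variable R : numDomainType.

Lemma poly_eval_eq0 (p : {poly R}) : (forall x, p.[x] = 0) -> p = 0.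
Proof.
move=> p0; apply: (@roots_geq_poly_eq0 _ _ [seq i%:R | i <- iota 0 (size p)]).
- by apply/allP => x _; rewrite /root p0.
- by rewrite map_inj_uniq ?iota_uniq // => i j /eqP; rewrite eqr_nat => /eqP.
- by rewrite size_map size_iota.
Qed.

Definition vrcons k (v : 'I_k -> R) (x : R) : 'I_k.+1 -> R :=
  fun i => if unlift ord_max i is Some j then v j else x.

Lemma lift_max_widen k (i : 'I_k) : lift ord_max i = widen_ord (leqnSn k) i.
Proof. by apply/val_inj; rewrite /= /bump leqNgt ltn_ord. Qed.

Lemma vrcons_widen k v x (i : 'I_k) : vrcons v x (widen_ord (leqnSn k) i) = v i.
Proof. by rewrite -lift_max_widen /vrcons liftK. Qed.

Lemma vrcons_max k v x : vrcons (k := k) v x ord_max = x.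
Proof. by rewrite /vrcons unlift_none. Qed.

Lemma meval_vrcons k (p : {mpoly R[k.+1]}) v x :
  p.@[vrcons v x] = (map_poly (meval v) (muni p)).[x].
Proof.
rewrite muniE mevalE raddf_sum /= horner_sum; apply: eq_bigr => m _.
rewrite map_polyZ map_polyXn hornerZ hornerXn /= mevalZ mevalX.
rewrite big_ord_recr /= vrcons_max mulrA; congr (_ * _ * _).
by apply: eq_bigr => i _; rewrite vrcons_widen mnmE.
Qed.

Definition mnm_widen k (m : 'X_{1..k.+1}) : 'X_{1..k} :=
  [multinom m (widen_ord (leqnSn k) i) | i < k].

Lemma eq_mnm_widen k (m m' : 'X_{1..k.+1}) :
  (mnm_widen m' == mnm_widen m) && (m' ord_max == m ord_max) = (m' == m).
Proof.
apply/idP/eqP => [/andP [/eqP eq_widen /eqP eq_max]|->]; last by rewrite !eqxx.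
apply/mnmP => i; case: (unliftP ord_max i) => [j ->|->] //.
by move/mnmP: eq_widen => /(_ j); rewrite lift_max_widen !mnmE.
Qed.

Lemma mcoeff_muni k (p : {mpoly R[k.+1]}) m :
  ((muni p)`_(m ord_max))@_(mnm_widen m) = p@_m.
Proof.
rewrite muniE coef_sum raddf_sum /= [in RHS](mpolyE p) raddf_sum /=.
apply: eq_bigr => m' _; rewrite coefZ coefXn mulr_natr mcoeffMn mcoeffZ mcoeffX.
rewrite -mulrnAr -mulrnA mulnb -/(mnm_widen m') (eq_sym (m ord_max)).
by rewrite eq_mnm_widen mcoeffZ mcoeffX mulr_natr.
Qed.

Lemma mpoly_eval_eq0 k (p : {mpoly R[k]}) : (forall v, p.@[v] = 0) -> p = 0.
Proof.
elim: k p => [|k IHk] p p0.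
  have mnm0 (m : 'X_{1..0}) : m = 0%MM by apply/mnmP => -[].
  apply/mpolyP => m; rewrite mcoeff0 (mnm0 m) -(p0 (fun _ => 0)) mevalE.
  rewrite [in LHS](mpolyE p) raddf_sum /=; apply: eq_bigr => m' _.
  by rewrite mcoeffZ mcoeffX big_ord0 (mnm0 m') eqxx.
apply/mpolyP => m; rewrite mcoeff0 -mcoeff_muni.
suff -> : muni p = 0 by rewrite coef0 mcoeff0.
apply/polyP => j; rewrite coef0; apply: IHk => v.
have /polyP/(_ j) : map_poly (meval v) (muni p) = 0.
  by apply: poly_eval_eq0 => x; rewrite -meval_vrcons p0.
by rewrite coef_map coef0.
Qed.

End IdentityPrinciple.

Section SplitPoint.
Variables (R : ringType) (n : nat).

Definition split_point (a b : 'I_n -> R) : 'I_(n + n) -> R :=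
  fun j => match split j with inl i => a i | inr i => b i end.

Lemma split_pointE (v : 'I_(n + n) -> R) :
  v =1 split_point (fun i => v (lshift n i)) (fun i => v (rshift n i)).
Proof.
by move=> j; rewrite /split_point; case E: (split j) => [i|i]; rewrite -{1}(splitK j) E.
Qed.

Lemma split_lshift (i : 'I_n) : split (lshift n i) = inl i.
Proof. exact: (unsplitK (inl i)). Qed.

Lemma split_rshift (i : 'I_n) : split (rshift n i) = inr i.
Proof. exact: (unsplitK (inr i)). Qed.

End SplitPoint.

Section Stability.
Variables (F : fieldType) (n : nat).
Implicit Types (p : {mpoly F[n + n]}) (X Y Z : seq F).

Lemma perm_Pfun p X Y Y' : perm_eq Y Y' -> Pfun p X Y = Pfun p X Y'.
Proof.
by move=> eqY; apply: meval_eq => j; rewrite /psum_point; case: (split j) => // i; apply: perm_psum.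
Qed.

Lemma stable_cat p : stable p ->
  forall Z X Y, Pfun p (X ++ map -%R Z) (Z ++ Y) = Pfun p X Y.
Proof.
move=> st; elim => [|z Z IHZ] X Y; first by rewrite cats0.
rewrite /= -cat_rcons (@perm_Pfun _ _ _ (Z ++ z :: Y)) ?IHZ //.
by rewrite -cat1s -[z :: Y]cat1s perm_catCA.
Qed.

End Stability.

Section ClosedStability.
Variables (F : numClosedFieldType) (n : nat).
Implicit Types (p : {mpoly F[n + n]}) (a b c : 'I_n -> F).

(* Realise a, b, c as power sums of lists X, Y, Z; then a shift of the
   arguments by c is the effect of appending the pairs (-z | z), z in Z. *)
Lemma stable_shift p : stable p -> forall a b c,
  p.@[split_point (fun i => a i + (-1) ^+ i.+1 * c i) (fun i => b i + c i)] =
  p.@[split_point a b].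
Proof.
move=> st a b c.
pose ext (f : 'I_n -> F) (r : nat) := if insub r.-1 is Some i then f i else 0.
have psum_ext f W : (forall r, (0 < r <= n)%N -> psum r W = ext f r) ->
    forall i : 'I_n, psum i.+1 W = f i.
  by move=> psumW i; rewrite psumW /= ?ltn_ord // /ext /= valK.
have [X /psum_ext psumX] := psum_interpolate (ext a) n.
have [Y /psum_ext psumY] := psum_interpolate (ext b) n.
have [Z /psum_ext psumZ] := psum_interpolate (ext c) n.
have -> : p.@[split_point a b] = Pfun p X Y.
  apply: meval_eq => j; rewrite /split_point /psum_point.
  by case: (split j) => i; rewrite ?psumX ?psumY.
rewrite -(stable_cat st Z X Y); apply: meval_eq => j.
rewrite /split_point /psum_point; case: (split j) => i.
  by rewrite psum_cat psum_opp psumX psumZ.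
by rewrite psum_cat psumY psumZ addrC.
Qed.

Lemma stable_eta0 p : stable p -> forall a b,
  p.@[split_point a b] = p.@[split_point (fun i => a i - (-1) ^+ i.+1 * b i) (fun _ => 0)].
Proof.
move=> st a b; rewrite -[RHS](stable_shift st _ _ b); apply: meval_eq => j.
by rewrite /split_point; case: (split j) => i; rewrite ?subrK ?add0r.
Qed.

End ClosedStability.

(* A partition of n is encoded by its multiplicity function g : part i.+1
   occurs g i times; its weight is sum_i (i+1) g i. *)
Section Partitions.
Variable n : nat.

Definition mult_weight (g : {ffun 'I_n -> 'I_n.+1}) : nat := (\sum_(i < n) i.+1 * g i)%N.

Definition partition_mults : {set {ffun 'I_n -> 'I_n.+1}} := [set g | mult_weight g == n].

Definition xi_monomial (g : {ffun 'I_n -> 'I_n.+1}) : 'X_{1..n + n} :=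
  [multinom (match split j with inl i => nat_of_ord (g i) | inr _ => 0%N end) | j < n + n].

Lemma wdeg_split (m : 'X_{1..n + n}) :
  wdeg m = (\sum_(i < n) i.+1 * m (lshift n i) + \sum_(i < n) i.+1 * m (rshift n i))%N.
Proof.
rewrite /wdeg big_split_ord /=; congr (_ + _)%N; apply: eq_bigr => i _.
  by rewrite /var_weight split_lshift.
by rewrite /var_weight split_rshift.
Qed.

Lemma xi_monomialP (m : 'X_{1..n + n}) : wdeg m = n ->
  (forall i, m (rshift n i) = 0%N) -> exists2 g, g \in partition_mults & m = xi_monomial g.
Proof.
move=> wm eta0; have mult_le i : (m (lshift n i) < n.+1)%N.
  rewrite ltnS -[X in (_ <= X)%N]wm wdeg_split (bigD1 i) //= -addnA.
  by apply: leq_trans (leq_addr _ _); rewrite mulSn leq_addr.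
pose g : {ffun 'I_n -> 'I_n.+1} := [ffun i => Ordinal (mult_le i)].
have m_g : m = xi_monomial g.
  apply/mnmP => j; rewrite mnmE -{1}(splitK j).
  by case: (split j) => i /=; rewrite ?ffunE ?eta0.
exists g => //; rewrite inE; apply/eqP.
rewrite -[RHS]wm wdeg_split [X in (_ + X)%N]big1 ?addn0 => [|i _]; last first.
  by rewrite eta0 muln0.
by apply: eq_bigr => i _; rewrite ffunE.
Qed.

End Partitions.

Section UpperBound.
Variables (F : numClosedFieldType) (n : nat).

Lemma Pspace_eq0 (p : {mpoly F[n + n]}) : Pspace p ->
  (forall g, g \in partition_mults n -> p@_(xi_monomial g) = 0) -> p = 0.
Proof.
move=> [hom st] coef0; apply: mpoly_eval_eq0 => v.
rewrite (meval_eq p (split_pointE v)) (stable_eta0 st) mevalE.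
apply: big1_seq => m /andP [_ m_supp].
case: (boolP [exists i : 'I_n, m (rshift n i) != 0%N]) => [/existsP [i mi]|].
  rewrite (bigD1 (rshift n i)) //= /split_point split_rshift expr0n (negbTE mi).
  by rewrite mul0r mulr0.
rewrite negb_exists => /forallP /(_ _) /negPn /eqP eta0.
by have [g g_part ->] := xi_monomialP (hom m m_supp) eta0; rewrite coef0 ?mul0r.
Qed.

Lemma Pspace_lincomb d (f : 'I_d -> {mpoly F[n + n]}) (c : 'I_d -> F) :
  (forall i, Pspace (f i)) -> Pspace (\sum_(i < d) c i *: f i).
Proof.
move=> Pf; split.
  move=> m /msupp_sum_le /flattenP [s /mapP [i _ ->]] /msuppZ_le.
  by have [hom _] := Pf i; apply: hom.
move=> X Y x; rewrite /Pfun !raddf_sum /=; apply: eq_bigr => i _.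
by rewrite !mevalZ; have [_ st] := Pf i; rewrite -[meval _ (f i)]/(Pfun _ _ _) st.
Qed.

(* By Pspace_eq0 the coefficients at the xi_monomial g, g a partition of n,
   determine an element of P_n; a kernel vector of the coefficient matrix of
   #partitions + 1 elements is then a linear relation. *)
Lemma Pspace_dependent (f : 'I_#|partition_mults n|.+1 -> {mpoly F[n + n]}) :
  (forall i, Pspace (f i)) -> ~ lin_indep f.
Proof.
move=> Pf indep; pose N := #|partition_mults n|.
pose M : 'M[F]_(N.+1, N) := \matrix_(i, j) (f i)@_(xi_monomial (enum_val j)).
have [c c_neq0 cM] : exists2 c : 'rV_N.+1, c != 0 & c *m M = 0.
  have K_neq0 : kermx M != 0.
    by rewrite -mxrank_eq0 mxrank_ker subn_eq0 -ltnNge ltnS rank_leq_col.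
  have [i Ki] : exists i, row i (kermx M) != 0.
    apply/existsP; move: K_neq0; apply: contraNT; rewrite negb_exists => /forallP K0.
    by apply/eqP/row_matrixP => i; rewrite row0; apply/eqP/negPn/K0.
  by exists (row i (kermx M)); rewrite // -row_mul mulmx_ker row0.
have comb0 : \sum_(i < N.+1) c 0 i *: f i = 0.
  apply: Pspace_eq0 => [|g g_part]; first exact: Pspace_lincomb.
  have /rowP/(_ (enum_rank_in g_part g)) := cM; rewrite !mxE => cM_g.
  rewrite -[RHS]cM_g raddf_sum /=; apply: eq_bigr => i _.
  by rewrite mcoeffZ !mxE enum_rankK_in.
by move: c_neq0; apply/negP/negPn/eqP/rowP => j; rewrite (indep _ comb0) mxE.
Qed.

End UpperBound.

Section WeightedHomogeneity.
Variables (F : fieldType) (n : nat).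
Implicit Types (p q : {mpoly F[n + n]}) (d e : nat).

Lemma wdegD (m1 m2 : 'X_{1..n + n}) : wdeg (m1 + m2) = (wdeg m1 + wdeg m2)%N.
Proof. by rewrite /wdeg -big_split; apply: eq_bigr => j _; rewrite mnmDE mulnDr. Qed.

Lemma wt_homog1 : wt_homog 0 (1 : {mpoly F[n + n]}).
Proof.
move=> m; rewrite msupp1 inE => /eqP ->.
by rewrite /wdeg big1 // => j _; rewrite mnm0E muln0.
Qed.

Lemma wt_homogX (j : 'I_(n + n)) : wt_homog (var_weight j) ('X_j : {mpoly F[n + n]}).
Proof.
move=> m; rewrite msuppX inE => /eqP ->; rewrite /wdeg (bigD1 j) //= mnm1E eqxx muln1.
by rewrite big1 ?addn0 // => i ij; rewrite mnm1E eq_sym (negbTE ij) muln0.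
Qed.

Lemma wt_homogD d p q : wt_homog d p -> wt_homog d q -> wt_homog d (p + q).
Proof. by move=> hp hq m /msuppD_le; rewrite mem_cat => /orP [/hp|/hq]. Qed.

Lemma wt_homogZ d c p : wt_homog d p -> wt_homog d (c *: p).
Proof. by move=> hp m /msuppZ_le /hp. Qed.

Lemma wt_homogM d e p q : wt_homog d p -> wt_homog e q -> wt_homog (d + e) (p * q).
Proof.
by move=> hp hq m /msuppM_le /allpairsP [[m1 m2] [/= m1p m2q ->]]; rewrite wdegD hp ?hq.
Qed.

Lemma wt_homogXn d k p : wt_homog d p -> wt_homog (d * k) (p ^+ k).
Proof.
move=> hp; elim: k => [|k IHk]; first by rewrite muln0 expr0; apply: wt_homog1.
by rewrite exprS mulnS; apply: wt_homogM.
Qed.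

End WeightedHomogeneity.

Section LowerBound.
Variables (F : numFieldType) (n : nat).

Definition zeta (i : 'I_n) : {mpoly F[n + n]} :=
  'X_(lshift n i) + (- (-1) ^+ i.+1) *: 'X_(rshift n i).

Definition zeta_monomial (g : {ffun 'I_n -> 'I_n.+1}) : {mpoly F[n + n]} :=
  \prod_(i < n) zeta i ^+ g i.

Lemma wt_homog_zeta_monomial g : wt_homog (mult_weight g) (zeta_monomial g).
Proof.
rewrite /zeta_monomial /mult_weight; elim/big_rec2: _ => [|i p d _ hp].
  exact: wt_homog1.
apply: wt_homogM => //; apply: wt_homogXn; apply: wt_homogD.
  by have := @wt_homogX F n (lshift n i); rewrite /var_weight split_lshift.
by apply: wt_homogZ; have := @wt_homogX F n (rshift n i); rewrite /var_weight split_rshift.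
Qed.

Lemma meval_zeta_monomial g v : (zeta_monomial g).@[v] =
  \prod_(i < n) (v (lshift n i) - (-1) ^+ i.+1 * v (rshift n i)) ^+ g i.
Proof.
rewrite /zeta_monomial rmorph_prod; apply: eq_bigr => i _.
by rewrite rmorphXn /zeta rmorphD /= mevalZ !mevalXU mulNr.
Qed.

Lemma stable_zeta_monomial g : stable (zeta_monomial g).
Proof.
move=> X Y x; rewrite /Pfun !meval_zeta_monomial; apply: eq_bigr => i _.
rewrite /psum_point !split_lshift !split_rshift psum_rcons psum_cons.
by congr (_ ^+ _); rewrite -(mulN1r x) exprMn; ring.
Qed.

Lemma Pspace_zeta_monomial g : g \in partition_mults n -> Pspace (zeta_monomial g).
Proof.
rewrite inE => /eqP wg; split; last exact: stable_zeta_monomial.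
by rewrite -[X in wt_homog X]wg; apply: wt_homog_zeta_monomial.
Qed.

Definition mults_mnm (g : {ffun 'I_n -> 'I_n.+1}) : 'X_{1..n} :=
  [multinom (nat_of_ord (g i)) | i < n].

Lemma mults_mnm_inj : injective mults_mnm.
Proof.
move=> g h /mnmP eq_gh; apply/ffunP => i; apply/val_inj.
by have := eq_gh i; rewrite !mnmE.
Qed.

(* At eta = 0 the zeta-monomials become distinct monomials in xi. *)
Lemma zeta_monomial_indep :
  lin_indep (fun j : 'I_#|partition_mults n| => zeta_monomial (enum_val j)).
Proof.
move=> c comb0 j.
pose Q : {mpoly F[n]} := \sum_(k < #|partition_mults n|) c k *: 'X_[mults_mnm (enum_val k)].
have Q0 : Q = 0.
  apply: mpoly_eval_eq0 => a.
  have := congr1 (meval (split_point a (fun _ => 0))) comb0.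
  rewrite raddf_sum meval0 /= => <-; rewrite raddf_sum /=; apply: eq_bigr => k _.
  rewrite !mevalZ mevalX meval_zeta_monomial; congr (_ * _); apply: eq_bigr => i _.
  by rewrite /split_point split_lshift split_rshift mulr0 subr0 mnmE.
have := congr1 (mcoeff (mults_mnm (enum_val j))) Q0.
rewrite mcoeff0 raddf_sum /= (bigD1 j) //= mcoeffZ mcoeffX eqxx mulr1 big1 ?addr0 //.
move=> k k_neq_j; rewrite mcoeffZ mcoeffX.
case: eqP => [/mults_mnm_inj/enum_val_inj eq_kj|]; last by rewrite mulr0.
by rewrite eq_kj eqxx in k_neq_j.
Qed.

End LowerBound.

(* Expanding prod_k sum_j q^(k j) as a sum over g : 'I_n -> 'I_n.+1 gives one
   monomial q^(mult_weight g) per g. *)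
Lemma card_partition_mults n : #|partition_mults n| = euler_coef n.
Proof.
rewrite /euler_coef /euler_poly big_add1 /= big_mkord.
rewrite (bigA_distr_bigA (fun (i : 'I_n) (j : 'I_n.+1) => 'X^(i.+1 * j) : {poly nat})).
under eq_bigr do rewrite prodrXr.
rewrite -[nth _ _ _]/((_ : {poly nat})`_n) coef_sum.
under eq_bigr do rewrite coefXn natn.
rewrite -sum1_card big_mkcond /=; apply: eq_bigr => g _.
by rewrite inE /mult_weight eq_sym; case: (_ == _).
Qed.

Theorem theorem1 (F : numClosedFieldType) (n : nat) :
  has_dim (@Pspace F n) (euler_coef n).
Proof.
rewrite -card_partition_mults; split; last exact: Pspace_dependent.
exists (fun j => zeta_monomial F (enum_val j)); split.
  by move=> j; apply/Pspace_zeta_monomial/enum_valP.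
exact: zeta_monomial_indep.
Qed.
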